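(* Let $\varepsilon \in [0,1]$ and let $w_1, w_2 \in \mathbb{S}^{n-1}$ satisfy $\|w_1 - w_2\| \leq 1 - \varepsilon^2/2$. Let $v_1, v \in \mathbb{R}^n$ satisfy $\langle w_1, v_1\rangle \geq 1$, $\langle w_2, v\rangle \geq \langle w_2, v_1\rangle$, and $\|v_1\|, \|v\| \leq (1-\varepsilon^2/2)^{-1}$. Let $a \in \mathbb{S}^{n-1}$ satisfy $\langle a, v\rangle \geq 1$. Then $\|w_2 - a\| \leq 2\varepsilon + \|w_1 - w_2\|$.
   Context: $\|\cdot\|$ is the Euclidean norm and $\mathbb{S}^{n-1}$ the Euclidean unit sphere in $\mathbb{R}^n$. *)

From mathcomp Require Import all_boot all_order all_algebra.
Set Implicit Arguments. Unset Strict Implicit. Unset Printing Implicit Defensive.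
Import Order.TTheory GRing.Theory Num.Theory.
Local Open Scope ring_scope.

Definition dotv (R : rcfType) (n : nat) (u v : 'rV[R]_n) : R :=
  \sum_(i < n) u 0 i * v 0 i.

Definition enorm (R : rcfType) (n : nat) (u : 'rV[R]_n) : R :=
  Num.sqrt (dotv u u).

Definition on_sphere (R : rcfType) (n : nat) (u : 'rV[R]_n) : Prop :=
  enorm u = 1.

From mathcomp Require Import all_boot all_order all_algebra.
From mathcomp Require Import ring lra.
Import Order.TTheory GRing.Theory Num.Theory.
Local Open Scope ring_scope.

(* Put d := 1 - eps^2/2. If w is a unit vector, <w, u> >= 1 and d ||u|| <= 1,
   then ||w - d u||^2 = 1 - 2 d <w, u> + d^2 ||u||^2 <= 2 - 2 d = eps^2. So d v1
   is eps-close to w1 and d v is eps-close to a. Comparing the expansions of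
   ||w1 - d v1||^2 and ||w2 - d v1||^2 bounds 2 - 2 d <w2, v1> by
   (||w1 - w2|| + eps)^2; as <w2, v> >= <w2, v1>, the same bound holds for
   ||w2 - d v||^2, and the triangle inequality through d v concludes. *)

Section EuclideanSpace.
Context {R : rcfType} {n : nat}.
Implicit Types (u v w : 'rV[R]_n) (c : R).

Lemma dotvC u v : dotv u v = dotv v u.
Proof. by apply: eq_bigr => i _; rewrite mulrC. Qed.

Lemma dotvDl u v w : dotv (u + v) w = dotv u w + dotv v w.
Proof. by rewrite /dotv -big_split; apply: eq_bigr => i _; rewrite mxE mulrDl. Qed.

Lemma dotvNl u w : dotv (- u) w = - dotv u w.
Proof. by rewrite /dotv -sumrN; apply: eq_bigr => i _; rewrite mxE mulNr. Qed.

Lemma dotvZl c u w : dotv (c *: u) w = c * dotv u w.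
Proof. by rewrite /dotv mulr_sumr; apply: eq_bigr => i _; rewrite mxE mulrA. Qed.

Lemma dotvBl u v w : dotv (u - v) w = dotv u w - dotv v w.
Proof. by rewrite dotvDl dotvNl. Qed.

Lemma dotvDr u v w : dotv w (u + v) = dotv w u + dotv w v.
Proof. by rewrite dotvC dotvDl !(dotvC w). Qed.

Lemma dotvNr u w : dotv w (- u) = - dotv w u.
Proof. by rewrite dotvC dotvNl dotvC. Qed.

Lemma dotvZr c u w : dotv w (c *: u) = c * dotv w u.
Proof. by rewrite dotvC dotvZl dotvC. Qed.

Lemma dotvBr u v w : dotv w (u - v) = dotv w u - dotv w v.
Proof. by rewrite dotvDr dotvNr. Qed.

Lemma dotv0l v : dotv 0 v = 0.
Proof. by rewrite -(scale0r 0) dotvZl mul0r. Qed.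

Lemma dotvv_ge0 u : 0 <= dotv u u.
Proof. by apply: sumr_ge0 => i _; rewrite -expr2 sqr_ge0. Qed.

Lemma dotvv_eq0 u : (dotv u u == 0) = (u == 0).
Proof.
apply/idP/eqP => [/eqP uu0 | ->]; last by rewrite dotv0l.
have sq_ge0 (j : 'I_n) : true -> 0 <= u 0 j * u 0 j by rewrite -expr2 sqr_ge0.
apply/rowP => i; have /eqP := @psumr_eq0P _ _ xpredT _ sq_ge0 uu0 i isT.
by rewrite mulf_eq0 orbb mxE => /eqP.
Qed.

Lemma enorm_ge0 u : 0 <= enorm u.
Proof. exact: sqrtr_ge0. Qed.

Lemma sqr_enorm u : enorm u ^+ 2 = dotv u u.
Proof. by rewrite sqr_sqrtr // dotvv_ge0. Qed.

Lemma enorm_eq0 u : (enorm u == 0) = (u == 0).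
Proof. by rewrite sqrtr_eq0 -dotvv_eq0 eq_le dotvv_ge0 andbT. Qed.

Lemma enorm_distC u v : enorm (u - v) = enorm (v - u).
Proof. by rewrite -opprB /enorm dotvNl dotvNr opprK. Qed.

Lemma sqr_enormBZ w c u :
  enorm (w - c *: u) ^+ 2 = enorm w ^+ 2 - 2 * c * dotv w u + c ^+ 2 * enorm u ^+ 2.
Proof. by rewrite !sqr_enorm !(dotvBl, dotvBr, dotvZl, dotvZr) (dotvC u w); ring. Qed.

Lemma dotv_le_enorm u v : dotv u v <= enorm u * enorm v.
Proof.
have [-> | u0] := eqVneq u 0; first by rewrite dotv0l mulr_ge0 ?enorm_ge0.
have [-> | v0] := eqVneq v 0; first by rewrite dotvC dotv0l mulr_ge0 ?enorm_ge0.
have uv_gt0 : 0 < enorm u * enorm v by rewrite mulr_gt0 // lt0r enorm_eq0 ?u0 ?v0 enorm_ge0.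
have := sqr_ge0 (enorm (enorm v *: u - enorm u *: v)).
rewrite sqr_enormBZ !sqr_enorm !(dotvZl, dotvZr) -!sqr_enorm => expand_ge0.
have : 0 <= (enorm u * enorm v) * (2 * (enorm u * enorm v - dotv u v)) by nra.
by rewrite pmulr_rge0 // => ?; lra.
Qed.

Lemma ler_enormD u v : enorm (u + v) <= enorm u + enorm v.
Proof.
rewrite -ler_sqr ?nnegrE ?addr_ge0 ?enorm_ge0 //.
rewrite sqr_enorm dotvDl !dotvDr -!sqr_enorm (dotvC v u).
by have := dotv_le_enorm u v; nra.
Qed.

Lemma ler_enorm_distD u v w : enorm (v - w) <= enorm (v - u) + enorm (u - w).
Proof. by have := ler_enormD (v - u) (u - w); rewrite addrA subrK. Qed.

End EuclideanSpace.

Section UnitSphere.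
Context {R : rcfType} {n : nat}.
Implicit Types (u w : 'rV[R]_n) (c eps : R).

Lemma sqr_enorm_sphereBZ_le w c u : on_sphere w -> 0 < c -> enorm u <= c^-1 ->
  enorm (w - c *: u) ^+ 2 <= 2 - 2 * c * dotv w u.
Proof.
move=> w_unit c_gt0 u_le; rewrite sqr_enormBZ w_unit expr1n -exprMn.
have cu_le1 : c * enorm u <= 1 by rewrite -ler_pdivlMl // mulr1.
have := mulr_ge0 (ltW c_gt0) (enorm_ge0 u); nra.
Qed.

Lemma enorm_sphereBZ_le w c u eps : on_sphere w -> 0 < c -> enorm u <= c^-1 ->
  1 <= dotv w u -> 0 <= eps -> 2 - 2 * c <= eps ^+ 2 -> enorm (w - c *: u) <= eps.
Proof.
move=> w_unit c_gt0 u_le wu_ge1 eps_ge0 c_eps.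
rewrite -ler_sqr ?nnegrE ?enorm_ge0 //.
apply: le_trans (sqr_enorm_sphereBZ_le w c u w_unit c_gt0 u_le) _; nra.
Qed.

Lemma sphere_dotv_transfer w1 w2 c u eps :
  on_sphere w1 -> on_sphere w2 -> 0 < c -> enorm u <= c^-1 ->
  1 <= dotv w1 u -> 0 <= eps -> 2 - 2 * c <= eps ^+ 2 ->
  2 - 2 * c * dotv w2 u <= (enorm (w1 - w2) + eps) ^+ 2.
Proof.
move=> w1_unit w2_unit c_gt0 u_le wu_ge1 eps_ge0 c_eps.
have e_le := enorm_sphereBZ_le w1 c u eps w1_unit c_gt0 u_le wu_ge1 eps_ge0 c_eps.
have f_le : enorm (w2 - c *: u) <= enorm (w1 - w2) + enorm (w1 - c *: u).
  by rewrite enorm_distC; apply: ler_enorm_distD.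
have f_ge0 := enorm_ge0 (w2 - c *: u); have d_ge0 := enorm_ge0 (w1 - w2).
have e_ge0 := enorm_ge0 (w1 - c *: u).
have := sqr_enormBZ w1 c u; have := sqr_enormBZ w2 c u.
rewrite w1_unit w2_unit; nra.
Qed.

End UnitSphere.

Arguments sqr_enorm_sphereBZ_le {R n w c u}.
Arguments enorm_sphereBZ_le {R n w c u eps}.
Arguments sphere_dotv_transfer {R n w1 w2 c u eps}.

Theorem lemma3p6 (R : rcfType) (n : nat) (eps : R) (w1 w2 v1 v a : 'rV[R]_n) :
  0 <= eps -> eps <= 1 ->
  on_sphere w1 -> on_sphere w2 ->
  enorm (w1 - w2) <= 1 - eps ^+ 2 / 2 ->
  1 <= dotv w1 v1 ->
  dotv w2 v1 <= dotv w2 v ->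
  enorm v1 <= (1 - eps ^+ 2 / 2)^-1 ->
  enorm v <= (1 - eps ^+ 2 / 2)^-1 ->
  on_sphere a ->
  1 <= dotv a v ->
  enorm (w2 - a) <= 2 * eps + enorm (w1 - w2).
Proof.
move=> eps_ge0 eps_le1 w1_unit w2_unit _ w1v1 w2v1_le v1_le v_le a_unit av.
set c := 1 - eps ^+ 2 / 2 in v1_le v_le.
have c_gt0 : 0 < c by rewrite /c; nra.
have c_eps : 2 - 2 * c <= eps ^+ 2 by rewrite /c; lra.
have a_close := enorm_sphereBZ_le a_unit c_gt0 v_le av eps_ge0 c_eps.
have w2_close : enorm (w2 - c *: v) <= enorm (w1 - w2) + eps.
  rewrite -ler_sqr ?nnegrE ?addr_ge0 ?enorm_ge0 //.
  apply: le_trans (sqr_enorm_sphereBZ_le w2_unit c_gt0 v_le) _.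
  apply: le_trans (sphere_dotv_transfer w1_unit w2_unit c_gt0 v1_le w1v1 eps_ge0 c_eps).
  by rewrite lerD2l lerN2 ler_pM2l ?mulr_gt0.
have := ler_enorm_distD (c *: v) w2 a; rewrite (enorm_distC (c *: v)); lra.
Qed.
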